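(* Let $n\ge2$, let $G$ be the Lie group of invertible $n\times n$ upper triangular real matrices, and let $Z$ be the center of $G$ (the nonzero real scalar matrices). Then $G/Z$ has the topological $R_\infty$-property.
   Context: For an automorphism $\varphi$ of a group $G$, the $\varphi$-twisted conjugacy classes are the equivalence classes of the relation $x\sim_\varphi y$ iff $y=gx\varphi(g)^{-1}$ for some $g\in G$; $R(\varphi)\in\mathbb{N}\cup\{\infty\}$ is their number. A topological group $G$ has the topological $R_\infty$-property if $R(\varphi)=\infty$ for every automorphism $\varphi$ of $G$ that is a homeomorphism (for a Lie group: every continuous automorphism). *)

From HB Require Import structures.
From mathcomp Require Import all_boot all_order all_algebra generic_quotient.
From mathcomp Require Import all_classical all_reals topology normedtype.
Import numFieldNormedType.Exports.
Set Implicit Arguments. Unset Strict Implicit. Unset Printing Implicit Defensive.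
Import Order.TTheory GRing.Theory Num.Theory.
Local Open Scope classical_set_scope.
Local Open Scope ring_scope.

Definition upper_tri (R : nzRingType) (n : nat) (A : 'M[R]_n) : bool :=
  [forall i : 'I_n, forall j : 'I_n, (j < i)%N ==> (A i j == 0)].

Definition UTset (R : realType) (n : nat) : set 'M[R]_n :=
  [set A | upper_tri A && (A \in unitmx)].

(* G as a topological space: the subspace (initial) topology induced by
   the inclusion into 'M[R]_n (= R^(n*n)). *)
Notation UT R n := (set_type (@UTset R n)).

Lemma upper_tri_mul (R : realType) (n : nat) (A B : 'M[R]_n) :
  upper_tri A -> upper_tri B -> upper_tri (A *m B).
Proof.
move=> /forallP hA /forallP hB; apply/forallP => i; apply/forallP => j.
apply/implyP => ji; rewrite mxE big1 // => k _.
have [ki|ik] := ltnP k i.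
  by move: (hA i) => /forallP /(_ k) /implyP /(_ ki) /eqP ->; rewrite mul0r.
have jk : (j < k)%N by apply: (leq_trans ji ik).
by move: (hB k) => /forallP /(_ j) /implyP /(_ jk) /eqP ->; rewrite mulr0.
Qed.

Lemma UTset_mul (R : realType) (n : nat) (A B : 'M[R]_n) :
  A \in @UTset R n -> B \in @UTset R n -> A *m B \in @UTset R n.
Proof.
rewrite !inE /= => /andP [uA iA] /andP [uB iB].
by apply/andP; split; [exact: upper_tri_mul | rewrite unitmx_mul iA].
Qed.

Definition UTmul (R : realType) (n : nat) (A B : UT R n) : UT R n :=
  exist _ (val A *m val B) (UTset_mul (valP A) (valP B)).

(* A ~ B iff B = a A for a nonzero scalar a, i.e. B is in the coset A Z,
   where Z = { a 1 | a <> 0 } is the centre of G. *)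
Definition scal_rel (R : realType) (n : nat) (A B : UT R n) : bool :=
  `[< exists a : R, a != 0 /\ val B = a *: val A >].

Lemma scal_rel_refl (R : realType) (n : nat) : reflexive (@scal_rel R n).
Proof. by move=> A; apply/asboolP; exists 1; rewrite oner_eq0 scale1r. Qed.

Lemma scal_rel_sym (R : realType) (n : nat) : symmetric (@scal_rel R n).
Proof.
suff H : forall A B : UT R n, scal_rel A B -> scal_rel B A.
  by move=> A B; apply/idP/idP => /H.
move=> A B /asboolP [a [a0 hB]]; apply/asboolP; exists a^-1.
by rewrite hB invr_eq0 a0 scalerA mulVf // scale1r.
Qed.

Lemma scal_rel_trans (R : realType) (n : nat) : transitive (@scal_rel R n).
Proof.
move=> B A C /asboolP [a [a0 hB]] /asboolP [b [b0 hC]]; apply/asboolP.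
by exists (b * a); rewrite hC hB mulf_neq0 // scalerA.
Qed.

Canonical scal_equiv (R : realType) (n : nat) :=
  EquivRel (@scal_rel R n) (@scal_rel_refl R n) (@scal_rel_sym R n)
    (@scal_rel_trans R n).

Notation GmodZ R n := (quotient_topology {eq_quot @scal_equiv R n}%qT).

Definition GmodZ_mul (R : realType) (n : nat) (x y : GmodZ R n) : GmodZ R n :=
  (\pi_(GmodZ R n) (UTmul (repr x) (repr y)))%qT.

Definition top_automorphism (R : realType) (n : nat)
    (phi : GmodZ R n -> GmodZ R n) : Prop :=
  {morph phi : x y / GmodZ_mul x y} /\
  exists psi : GmodZ R n -> GmodZ R n,
    [/\ cancel phi psi, cancel psi phi, continuous phi & continuous psi].

(* x ~_phi y iff y = g x phi(g)^{-1} for some g, written without inverses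
   as y phi(g) = g x. *)
Definition twisted_conj (R : realType) (n : nat)
    (phi : GmodZ R n -> GmodZ R n) (x y : GmodZ R n) : Prop :=
  exists g : GmodZ R n, GmodZ_mul y (phi g) = GmodZ_mul g x.

Definition twisted_classes (R : realType) (n : nat)
    (phi : GmodZ R n -> GmodZ R n) : set (set (GmodZ R n)) :=
  [set twisted_conj phi x | x in [set: GmodZ R n]].

Definition R_infinite (R : realType) (n : nat)
    (phi : GmodZ R n -> GmodZ R n) : Prop :=
  infinite_set (twisted_classes phi).

(* The character [chi [A] = A_11 / A_nn] of G/Z is invariant under every
   automorphism phi, so it is constant on phi-twisted classes; as it takes every
   nonzero real value, there are infinitely many classes.  For the invariance,
   the elements of G/Z commuting with all commutators form the corner subgroup
   U = { [1 + t E_1n] }, which phi therefore maps to itself through an additive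
   map f of R.  Conjugation by x rescales t by chi x, so
   f (chi x * t) = chi (phi x) * f t, and t |-> f t / f 1 is a ring
   endomorphism of R, hence the identity: chi (phi x) = chi x. *)

From HB Require Import structures.
From mathcomp Require Import all_boot all_order all_algebra generic_quotient.
From mathcomp Require Import all_classical all_reals topology normedtype.
Import numFieldNormedType.Exports.
From mathcomp Require Import ring.
Set Implicit Arguments.
Unset Strict Implicit.
Unset Printing Implicit Defensive.
Import Order.TTheory GRing.Theory Num.Theory.
Local Open Scope classical_set_scope.
Local Open Scope ring_scope.

Lemma rmorph_real_id (R : realType) (f : {rmorphism R -> R}) : f =1 id.
Proof.
have f_mono : {homo f : x y / x <= y}.
  move=> x y; rewrite -subr_ge0 -(subr_ge0 (f x)) -rmorphB => /sqr_sqrtr <-.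
  by rewrite rmorphXn sqr_ge0.
move=> x; apply/eqP; rewrite eq_le !leNgt; apply/andP; split; apply/negP.
- case/rat_in_itvoo => q; rewrite in_itv /= => /andP[xq qfx].
  by have := f_mono _ _ (ltW xq); rewrite fmorph_rat leNgt qfx.
- case/rat_in_itvoo => q; rewrite in_itv /= => /andP[fxq qx].
  by have := f_mono _ _ (ltW qx); rewrite fmorph_rat leNgt fxq.
Qed.

Lemma upper_triP (R : nzRingType) (n : nat) (A : 'M[R]_n) :
  reflect (forall i j : 'I_n, (j < i)%N -> A i j = 0) (upper_tri A).
Proof.
apply: (iffP forallP) => [hA i j ji | hA i].
  by move: (hA i) => /forallP /(_ j) /implyP /(_ ji) /eqP.
by apply/forallP => j; apply/implyP => /hA ->.
Qed.

Lemma upper_tri_det (R : comNzRingType) (n : nat) (A : 'M[R]_n) :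
  upper_tri A -> \det A = \prod_i A i i.
Proof.
move=> /upper_triP hA; rewrite -det_tr det_trig.
  by apply: eq_bigr => i _; rewrite mxE.
by apply/is_trig_mxP => i j ij; rewrite mxE hA.
Qed.

Section UpperTriangular.
Context {R : realType} {n : nat}.
Implicit Types (A : 'M[R]_n) (X Y : UT R n).

Lemma UTsetE A : (A \in @UTset R n) = upper_tri A && [forall i, A i i != 0].
Proof.
have -> : (A \in @UTset R n) = upper_tri A && (A \in unitmx).
  by apply/idP/idP; rewrite inE.
rewrite unitmxE unitfE; case uA: (upper_tri A) => //=.
rewrite upper_tri_det //.
apply/idP/forallP => [/prodf_neq0 nz i | nz]; first exact: nz.
by apply/prodf_neq0 => i _; apply: nz.
Qed.

Lemma UT_diag_neq0 X (i : 'I_n) : val X i i != 0.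
Proof. by have := valP X; rewrite UTsetE => /andP[_ /forallP /(_ i)]. Qed.

Lemma UT_lower0 X (i j : 'I_n) : (j < i)%N -> val X i j = 0.
Proof. by have := valP X; rewrite UTsetE => /andP[/upper_triP /(_ i j)]. Qed.

Lemma UT_mulmx_diag X Y (i : 'I_n) : (val X *m val Y) i i = val X i i * val Y i i.
Proof.
rewrite mxE (bigD1 i) //= big1 ?addr0 // => k ki.
have [ki'|ik] := ltnP k i; first by rewrite UT_lower0 ?mul0r.
by rewrite (UT_lower0 Y) ?mulr0 // ltn_neqAle ik andbT eq_sym.
Qed.

Lemma UTset1 : 1%:M \in @UTset R n.
Proof.
rewrite UTsetE; apply/andP; split; last by apply/forallP => i; rewrite mxE eqxx oner_neq0.
by apply/upper_triP => i j; rewrite mxE; case: eqP => // ->; rewrite ltnn.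
Qed.

Definition UTone : UT R n := exist _ 1%:M UTset1.

Definition elem_mx (i j : 'I_n) (a : R) : 'M[R]_n := 1%:M + a *: delta_mx i j.

Lemma elem_mxE (i j : 'I_n) a (k l : 'I_n) :
  elem_mx i j a k l = (k == l)%:R + a * ((k == i) && (l == j))%:R.
Proof. by rewrite !mxE. Qed.

Lemma elem_mx_UT (i j : 'I_n) a :
  (i <= j)%N -> 1 + a *+ (i == j) != 0 -> elem_mx i j a \in @UTset R n.
Proof.
move=> ij ha; rewrite UTsetE; apply/andP; split.
  apply/upper_triP => k l lk; rewrite elem_mxE (_ : k == l = false) ?add0r; last first.
    by apply/negbTE; apply: contraTneq lk => ->; rewrite ltnn.
  have [ki|] := eqVneq k i; have [lj|] := eqVneq l j; rewrite ?andbF ?mulr0 //.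
  by move: lk; rewrite ki lj ltnNge ij.
apply/forallP => k; rewrite elem_mxE eqxx.
case: (eqVneq k i) => [->|_]; last by rewrite mulr0 addr0 oner_neq0.
by move: ha; case: (i == j); rewrite ?mulr1 ?mulr0 ?addr0 ?oner_neq0.
Qed.

End UpperTriangular.

Section Quotient.
Context {R : realType} {n : nat}.
Implicit Types (A B : UT R n) (x y z : GmodZ R n).

Local Notation pi := (\pi_(GmodZ R n))%qT.

Lemma eqGmodZP A B : pi A = pi B <-> exists2 a : R, a != 0 & val B = a *: val A.
Proof.
split => [/eqquotP /asboolP [a [a0 ->]] | [a a0 eAB]]; first by exists a.
by apply/eqquotP/asboolP; exists a.
Qed.

Lemma GmodZ_mul_pi A B : GmodZ_mul (pi A) (pi B) = pi (UTmul A B).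
Proof.
apply/eqGmodZP.
have [a a0 eA] : exists2 a : R, a != 0 & val A = a *: val (repr (pi A)).
  by apply/eqGmodZP; rewrite reprK.
have [b b0 eB] : exists2 b : R, b != 0 & val B = b *: val (repr (pi B)).
  by apply/eqGmodZP; rewrite reprK.
exists (a * b); first by rewrite mulf_neq0.
by rewrite /= eA eB -scalemxAl -scalemxAr scalerA.
Qed.

Lemma GmodZ_mulIr x y z : GmodZ_mul x z = GmodZ_mul y z -> x = y.
Proof.
rewrite -[x]reprK -[y]reprK -[z]reprK !GmodZ_mul_pi => /eqGmodZP[a a0 eXY].
apply/eqGmodZP; exists a => //; have zU : val (repr z) \in unitmx.
  by have := valP (repr z); rewrite inE => /andP[].
by move: eXY => /= /(congr1 (mulmx^~ (invmx (val (repr z))))); rewrite -scalemxAl !mulmxK.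
Qed.

Definition GmodZ_one : GmodZ R n := pi UTone.

Lemma GmodZ_mul1 x : GmodZ_mul GmodZ_one x = x.
Proof.
rewrite -[x in RHS]reprK -[x in LHS]reprK GmodZ_mul_pi; congr pi.
by apply: val_inj; rewrite /= mul1mx.
Qed.

Lemma GmodZ_mulr1 x : GmodZ_mul x GmodZ_one = x.
Proof.
rewrite -[x in RHS]reprK -[x in LHS]reprK GmodZ_mul_pi; congr pi.
by apply: val_inj; rewrite /= mulmx1.
Qed.

End Quotient.

Section Corner.
Context {R : realType} {n : nat}.
Implicit Types (A : UT R n.+2) (x y : GmodZ R n.+2).

Local Notation pi := (\pi_(GmodZ R n.+2))%qT.
Local Notation E := (delta_mx (@ord0 n.+1) (@ord_max n.+1)).

Definition chi_mx (M : 'M[R]_n.+2) : R := M ord0 ord0 / M ord_max ord_max.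

Definition chi x : R := chi_mx (val (repr x)).

Lemma chi_mx_neq0 A : chi_mx (val A) != 0.
Proof. by rewrite mulf_neq0 ?invr_eq0 ?UT_diag_neq0. Qed.

Lemma chi_pi A : chi (pi A) = chi_mx (val A).
Proof.
have [a a0 ->] : exists2 a : R, a != 0 & val A = a *: val (repr (pi A)).
  by apply/eqGmodZP; rewrite reprK.
rewrite /chi /chi_mx !mxE; have := UT_diag_neq0 (repr (pi A)) ord_max.
by move=> nz; field; rewrite a0 nz.
Qed.

Lemma chi_mul x y : chi (GmodZ_mul x y) = chi x * chi y.
Proof.
rewrite /GmodZ_mul chi_pi /chi /chi_mx /= !UT_mulmx_diag.
have := UT_diag_neq0 (repr x) ord_max; have := UT_diag_neq0 (repr y) ord_max.
by move=> nzx nzy; field; rewrite nzx nzy.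
Qed.

Lemma chi_neq0 x : chi x != 0.
Proof. exact: chi_mx_neq0. Qed.

Lemma chi_surj (c : R) : c != 0 -> exists x, chi x = c.
Proof.
move=> c0; have cU : elem_mx (@ord0 n.+1) ord0 (c - 1) \in @UTset R n.+2.
  by apply: elem_mx_UT; rewrite // eqxx addrC subrK.
exists (pi (exist _ (elem_mx ord0 ord0 (c - 1)) cU)).
rewrite chi_pi /chi_mx !elem_mxE !eqxx /=.
by rewrite mulr1 mulr0 addr0 invr1 mulr1 addrC subrK.
Qed.

Lemma corner_subproof (t : R) : elem_mx ord0 ord_max t \in @UTset R n.+2.
Proof. by apply: elem_mx_UT; rewrite // mulr0n addr0 oner_neq0. Qed.

Definition corner (t : R) : GmodZ R n.+2 :=
  pi (exist _ (elem_mx ord0 ord_max t) (corner_subproof t)).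

Lemma corner_inj : injective corner.
Proof.
move=> t s /eqGmodZP[a _ /matrixP eAts].
have := eAts ord0 ord0; have := eAts ord0 ord_max; rewrite !mxE /= !eqxx /=.
by rewrite !mulr0 !addr0 !mulr1 !add0r => -> <-; rewrite mul1r.
Qed.

Lemma corner_add (t s : R) : GmodZ_mul (corner t) (corner s) = corner (t + s).
Proof.
rewrite GmodZ_mul_pi; congr pi; apply: val_inj.
rewrite /= /elem_mx mulmxDr mulmx1 mulmxDl mul1mx -scalemxAr -scalemxAl.
by rewrite mul_delta_mx_0 // !scaler0 addr0 scalerDl addrA.
Qed.

Lemma UT_mulmx_corner A : val A *m E = val A ord0 ord0 *: E.
Proof.
apply/matrixP => i j; rewrite !mxE (bigD1 ord0) //= big1 => [|k k0]; last first.
  by rewrite mxE (negbTE k0) mulr0.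
rewrite mxE eqxx /= addr0; have [->|i0] := eqVneq i ord0; first by [].
by rewrite UT_lower0 ?mul0r ?mulr0 // lt0n.
Qed.

Lemma corner_mulmx_UT A : E *m val A = val A ord_max ord_max *: E.
Proof.
apply/matrixP => i j; rewrite mxE (bigD1 ord_max) //= big1 => [|k kN]; last first.
  by rewrite mxE (negbTE kN) andbF mul0r.
rewrite !mxE eqxx andbT addr0.
have [->|jN] := eqVneq j ord_max; first by rewrite andbT mulrC.
by rewrite andbF mulr0 UT_lower0 ?mulr0 // ltn_neqAle jN -ltnS ltn_ord.
Qed.

Lemma corner_conj x (t : R) :
  GmodZ_mul x (corner t) = GmodZ_mul (corner (chi x * t)) x.
Proof.
rewrite -[x in LHS]reprK -[x in RHS]reprK !GmodZ_mul_pi chi_pi; congr pi.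
apply: val_inj; rewrite /= /elem_mx mulmxDr mulmx1 mulmxDl mul1mx.
rewrite -scalemxAr -scalemxAl UT_mulmx_corner corner_mulmx_UT !scalerA.
congr (_ + _ *: _); rewrite /chi_mx; have := UT_diag_neq0 (repr x) ord_max.
by move=> nz; field.
Qed.

End Corner.

(* [c (b a) = a b] says that [c] is the commutator [a b a^-1 b^-1]. *)
Definition centralizes_commutators {R : realType} {n : nat} (x : GmodZ R n) : Prop :=
  forall a b c : GmodZ R n,
    GmodZ_mul c (GmodZ_mul b a) = GmodZ_mul a b -> GmodZ_mul x c = GmodZ_mul c x.

Lemma centralizes_commutators_aut (R : realType) (n : nat)
    (phi : GmodZ R n -> GmodZ R n) (x : GmodZ R n) :
  top_automorphism phi -> centralizes_commutators x ->
  centralizes_commutators (phi x).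
Proof.
move=> [phiM [psi [phiK psiK _ _]]] cx a b c abc.
have : GmodZ_mul (psi c) (GmodZ_mul (psi b) (psi a)) = GmodZ_mul (psi a) (psi b).
  by apply: (can_inj phiK); rewrite !phiM !psiK.
by move=> /cx /(congr1 phi); rewrite !phiM psiK.
Qed.

Lemma centralizes_commutators_corner (R : realType) (n : nat) (t : R) :
  centralizes_commutators (@corner R n t).
Proof.
move=> a b c abc; have chi_c : chi c = 1.
  have := congr1 chi abc; rewrite !chi_mul => chi_abc.
  apply: (mulIf (mulf_neq0 (chi_neq0 b) (chi_neq0 a))).
  by rewrite chi_abc mul1r mulrC.
by rewrite corner_conj chi_c mul1r.
Qed.

Section Transvections.
Context {R : realType} {n : nat}.

(* [1 + E_ij] is the commutator of [1 + E_ii] and [1 + E_ij]. *)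
Lemma transvection_commutator (i j : 'I_n) : i != j ->
  elem_mx i j (1 : R) *m (elem_mx i j 1 *m elem_mx i i 1) = elem_mx i i 1 *m elem_mx i j 1.
Proof.
move=> ij; rewrite /elem_mx !scale1r.
have Eji : delta_mx i j *m delta_mx i i = 0 :> 'M[R]_n.
  by rewrite mul_delta_mx_0 // eq_sym.
have Ejj : delta_mx i j *m delta_mx i j = 0 :> 'M[R]_n.
  by rewrite mul_delta_mx_0 // eq_sym.
have Eii : delta_mx i i *m delta_mx i j = delta_mx i j :> 'M[R]_n by rewrite mul_delta_mx.
rewrite !(mulmxDr, mulmxDl, mulmx1, mul1mx, Eji, Eii, Ejj, addr0) mulmx0 add0r addr0.
by rewrite -!addrA; congr (_ + _); rewrite addrCA.
Qed.

Lemma commute_transvection_entries (X : UT R n) (i j : 'I_n) (lam : R) :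
  (i < j)%N -> elem_mx i j 1 *m val X = lam *: (val X *m elem_mx i j 1) ->
  forall k l, (k == i)%:R * val X j l = val X k i * (l == j)%:R.
Proof.
move=> ij eX.
have eL k l : (elem_mx i j 1 *m val X) k l = val X k l + (k == i)%:R * val X j l.
  rewrite /elem_mx scale1r mulmxDl mul1mx mxE mxE (bigD1 j) //= big1 => [|h hj].
    by rewrite !mxE eqxx andbT addr0.
  by rewrite !mxE (negbTE hj) andbF mul0r.
have eR k l : (val X *m elem_mx i j 1) k l = val X k l + val X k i * (l == j)%:R.
  rewrite /elem_mx scale1r mulmxDr mulmx1 mxE mxE (bigD1 i) //= big1 => [|h hi].
    by rewrite !mxE eqxx addr0.
  by rewrite !mxE (negbTE hi) mulr0.
have lam1 : lam = 1.
  have ji : (j == i) = false by apply/negbTE; apply: contraTneq ij => ->; rewrite ltnn.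
  have := congr1 (fun M : 'M[R]_n => M j j) eX; rewrite /= eL mxE eR eqxx ji.
  rewrite (UT_lower0 X ij) !mul0r !addr0 => eXjj.
  by apply: (mulIf (UT_diag_neq0 X j)); rewrite mul1r -eXjj.
move=> k l; have := congr1 (fun M : 'M[R]_n => M k l) eX.
by rewrite /= eL mxE eR lam1 mul1r => /addrI.
Qed.

End Transvections.

Lemma UT_corner_shape (R : realType) (n : nat) (X : UT R n.+2) :
  (forall i j : 'I_n.+2, (i < j)%N ->
     forall k l, (k == i)%:R * val X j l = val X k i * (l == j)%:R) ->
  val X = val X ord0 ord0 *: elem_mx ord0 ord_max (val X ord0 ord_max / val X ord0 ord0).
Proof.
move=> hX; have X00 := UT_diag_neq0 X ord0.
have XNN : val X ord_max ord_max = val X ord0 ord0.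
  by have := hX ord0 ord_max isT ord0 ord_max; rewrite !eqxx mul1r mulr1.
apply/matrixP => k l; rewrite !mxE.
have [->|lN] := eqVneq l ord_max.
  have [->|k0] := eqVneq k ord0; first by rewrite /= mulr1 add0r; field.
  have := hX ord0 k _ ord0 ord_max; rewrite eqxx mul1r => ->; last by rewrite lt0n.
  by rewrite /= mulr0 addr0 eq_sym.
have lt_lN : (l < @ord_max n.+1)%N by rewrite ltn_neqAle lN -ltnS ltn_ord.
have := hX l ord_max lt_lN k ord_max; rewrite eqxx mulr1 XNN => <-.
by rewrite andbF mulr0 addr0 mulrC.
Qed.

Section CornerCentralizer.
Context {R : realType} {n : nat}.
Local Notation pi := (\pi_(GmodZ R n.+2))%qT.

Lemma centralizes_commutatorsP (x : GmodZ R n.+2) :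
  centralizes_commutators x -> exists t, x = corner t.
Proof.
move=> cx; set X := repr x.
suff /UT_corner_shape eX : forall i j : 'I_n.+2, (i < j)%N ->
    forall k l, (k == i)%:R * val X j l = val X k i * (l == j)%:R.
  exists (val X ord0 ord_max / val X ord0 ord0); rewrite -[x]reprK.
  by apply/esym/eqGmodZP; exists (val X ord0 ord0); rewrite ?UT_diag_neq0.
move=> i j ij; have i_neq_j : i != j by apply: contraTneq ij => ->; rewrite ltnn.
have TU : elem_mx i j (1 : R) \in @UTset R n.+2.
  by apply: elem_mx_UT; [exact: ltnW | rewrite (negbTE i_neq_j) addr0 oner_neq0].
have DU : elem_mx i i (1 : R) \in @UTset R n.+2.
  by apply: elem_mx_UT; rewrite // eqxx lt0r_neq0 // addr_gt0 ?ltr01.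
pose T : UT R n.+2 := exist _ (elem_mx i j 1) TU.
pose D : UT R n.+2 := exist _ (elem_mx i i 1) DU.
have : GmodZ_mul (pi T) (GmodZ_mul (pi T) (pi D)) = GmodZ_mul (pi D) (pi T).
  by rewrite !GmodZ_mul_pi; congr pi; apply: val_inj; exact: transvection_commutator.
move=> /cx; rewrite -[x]reprK !GmodZ_mul_pi => /eqGmodZP[lam _].
exact: commute_transvection_entries.
Qed.

End CornerCentralizer.

Section Automorphism.
Context {R : realType} {m : nat} (phi : GmodZ R m.+2 -> GmodZ R m.+2).
Hypothesis phi_aut : top_automorphism phi.

Let phiM : {morph phi : x y / GmodZ_mul x y} := phi_aut.1.

Let phi_inj : injective phi.
Proof. by have [_ [psi [phiK _ _ _]]] := phi_aut; apply: can_inj phiK. Qed.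

Lemma phi_corner_exists (t : R) : exists s, phi (corner t) = corner s.
Proof.
apply: centralizes_commutatorsP; apply: (centralizes_commutators_aut phi_aut).
exact: centralizes_commutators_corner.
Qed.

Definition corner_map (t : R) : R := sval (cid (phi_corner_exists t)).

Lemma phi_corner (t : R) : phi (corner t) = corner (corner_map t).
Proof. exact: svalP (cid (phi_corner_exists t)). Qed.

Lemma corner_mapD (t s : R) : corner_map (t + s) = corner_map t + corner_map s.
Proof.
apply: (@corner_inj R m).
by rewrite -phi_corner -corner_add phiM !phi_corner corner_add.
Qed.

Lemma corner_mapB (t s : R) : corner_map (t - s) = corner_map t - corner_map s.
Proof. by apply/eqP; rewrite eq_sym subr_eq -corner_mapD subrK. Qed.

Lemma corner_map0 : corner_map 0 = 0.
Proof. by have := corner_mapB 0 0; rewrite !subrr. Qed.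

Lemma corner_map1_neq0 : corner_map 1 != 0.
Proof.
apply/eqP => f1; have : corner 1 = corner 0 :> GmodZ R m.+2.
  by apply: phi_inj; rewrite !phi_corner f1 corner_map0.
by move/corner_inj/eqP; rewrite oner_eq0.
Qed.

Lemma corner_map_conj (x : GmodZ R m.+2) (t : R) :
  corner_map (chi x * t) = chi (phi x) * corner_map t.
Proof.
apply: (@corner_inj R m); apply: (GmodZ_mulIr (z := phi x)).
by rewrite -phi_corner -phiM -corner_conj phiM phi_corner corner_conj.
Qed.

Lemma chi_phi (x : GmodZ R m.+2) : chi (phi x) = chi x.
Proof.
pose h t := corner_map t / corner_map 1.
have hB : zmod_morphism h by move=> a b; rewrite /h corner_mapB mulrBl.
have h_chi y : h (chi y) = chi (phi y).
  by rewrite /h -[chi y]mulr1 corner_map_conj mulfK ?corner_map1_neq0.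
have hM : monoid_morphism h.
  split=> [|a b]; first by rewrite /h divff ?corner_map1_neq0.
  have [->|a0] := eqVneq a 0; first by rewrite /h mul0r corner_map0 !mul0r.
  by have [y <-] := @chi_surj R m a a0; rewrite h_chi /h corner_map_conj mulrA.
pose hR : {rmorphism R -> R} :=
  HB.pack h (GRing.isZmodMorphism.Build _ _ h hB) (GRing.isMonoidMorphism.Build _ _ h hM).
by rewrite -h_chi; exact: (rmorph_real_id hR (chi x)).
Qed.

Lemma chi_twisted_conj (x y : GmodZ R m.+2) : twisted_conj phi x y -> chi y = chi x.
Proof.
case=> g /(congr1 chi); rewrite !chi_mul chi_phi => chi_gxy.
by apply: (mulIf (chi_neq0 g)); rewrite chi_gxy mulrC.
Qed.

Lemma phi_one : phi GmodZ_one = GmodZ_one.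
Proof. by apply: (GmodZ_mulIr (z := phi GmodZ_one)); rewrite -phiM !GmodZ_mul1. Qed.

Lemma twisted_conj_refl (x : GmodZ R m.+2) : twisted_conj phi x x.
Proof. by exists GmodZ_one; rewrite phi_one GmodZ_mulr1 GmodZ_mul1. Qed.

End Automorphism.

Theorem proposition5p4 (R : realType) (n : nat) (hn : (2 <= n)%N)
  (phi : GmodZ R n -> GmodZ R n) :
  top_automorphism phi -> R_infinite phi.
Proof.
case: n hn phi => [|[|m]] // _ phi phi_aut fin_classes.
have /choice[x chi_x] : forall k : nat, exists y : GmodZ R m.+2, chi y = k.+1%:R.
  by move=> k; apply: chi_surj; rewrite pnatr_eq0.
have class_inj : injective (fun k => twisted_conj phi (x k)).
  move=> j k /= jk; have := twisted_conj_refl phi_aut (x j).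
  by rewrite jk => /(chi_twisted_conj phi_aut) /eqP; rewrite !chi_x eqr_nat => /eqP [].
apply: infinite_nat; apply: (sub_finite_set _ (finite_preimage _ fin_classes)).
- by move=> k _; exists (x k).
- by move=> j k _ _; apply: class_inj.
Qed.
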